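(* Let $f$ and $g$ be multiplicative functions on $W_{\infty\infty}$ (with values in a commutative ring containing $\mathbf{Q}$, e.g. $\mathbf{C}$), and let $F(x,y)=\sum_{i,j\ge0}f_{ij}x^iy^j$, $G(x,y)=\sum_{i,j\ge0}g_{ij}x^iy^j$, $(F*G)(x,y)=\sum_{i,j\ge0}(f*g)_{ij}x^iy^j$ as formal power series. Let $F_0=F(x,0)$, $G_0=G(0,y)$, $\tilde F(x,y)=F(x,G_0\,y)$ and $\tilde G(x,y)=G(F_0\,x,y)$. Then $$\frac{1}{F*G}=\frac{1}{\tilde F\,G_0}+\frac{1}{F_0\,\tilde G}-\frac{1}{F_0\,G_0}.$$
   Context: $W_{\infty\infty}$ is the poset of shuffles over the infinite alphabets $\mathcal{A}_\infty=\{a_1,a_2,\dots\}$ and $\mathcal{X}_\infty=\{x_1,x_2,\dots\}$: its elements are finite words (possibly empty) with distinct letters from $\mathcal{A}_\infty\cup\mathcal{X}_\infty$ in which the letters of each alphabet occur in increasing order of subscripts, ordered by the reflexive-transitive closure of: $w\lessdot w'$ iff $w'$ is obtained from $w$ by deleting a letter of $\mathcal{A}_\infty$ or inserting a letter of $\mathcal{X}_\infty$. For finite $i,j$, $W_{ij}$ is the analogous poset over $\{a_1,\dots,a_i\}$ and $\{x_1,\dots,x_j\}$. Canonical isomorphism type of an interval $[u,v]$: write $u=u_1\cdots u_r$, $v=v_1\cdots v_s$, let $u_{i_1}\cdots u_{i_t}$ and $v_{j_1}\cdots v_{j_t}$ (increasing indices) be the subwords formed by the letters common to $u$ and $v$;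 with $i_0=j_0=0$, $i_{t+1}=r+1$, $j_{t+1}=s+1$, the canonical type is $\prod_{p=1}^{t+1}W_{i_p-i_{p-1}-1,\,j_p-j_{p-1}-1}=\prod_{i,j}W_{ij}^{c_{ij}}$. A multiplicative function is a function $f$ on intervals of $W_{\infty\infty}$ with values $f_{ij}$ ($i,j\ge0$), $f_{00}=1$, such that $f(u,v)=\prod_{i,j}f_{ij}^{c_{ij}}$ whenever $[u,v]$ has canonical type $\prod W_{ij}^{c_{ij}}$. The convolution is $(f*g)(u,v)=\sum_{u\le w\le v}f(u,w)g(w,v)$, and $(f*g)_{ij}$ denotes its value on an interval of canonical type $W_{ij}$, e.g. $[a_1\cdots a_i,\ x_1\cdots x_j]$. *)

From HB Require Import structures.
From mathcomp Require Import all_boot all_algebra.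
From mathcomp Require Import boolp classical_sets functions cardinality fsbigop.
From Stdlib Require Import Relation_Operators.

Set Implicit Arguments.
Unset Strict Implicit.
Unset Printing Implicit Defensive.

Import GRing.Theory.
Local Open Scope ring_scope.
Local Open Scope classical_set_scope.

(* A letter: [inl k] is a_{k+1} (alphabet A_oo), [inr k] is x_{k+1} (X_oo). *)
Definition letter := (nat + nat)%type.
Definition word := seq letter.

Definition a_idx (w : word) : seq nat :=
  pmap (fun l : letter => if l is inl k then Some k else None) w.
Definition x_idx (w : word) : seq nat :=
  pmap (fun l : letter => if l is inr k then Some k else None) w.

Definition is_word (w : word) : bool :=
  sorted ltn (a_idx w) && sorted ltn (x_idx w).

Definition covers (w w' : word) : Prop :=
  [/\ is_word w, is_word w' &
   (exists (s1 s2 : word) (k : nat), w = s1 ++ inl k :: s2 /\ w' = s1 ++ s2) \/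
   (exists (s1 s2 : word) (k : nat), w = s1 ++ s2 /\ w' = s1 ++ inr k :: s2)].

Definition wle (u v : word) : Prop :=
  [/\ is_word u, is_word v & clos_refl_trans word covers u v].

Definition interval (u v : word) : set word := [set w | wle u w /\ wle w v].

(* gaps P w: lengths of the maximal blocks of w between consecutive letters
   satisfying P (including before the first and after the last one);
   if w has t letters satisfying P, this has t+1 entries. *)
Fixpoint gaps (P : pred letter) (w : word) : seq nat :=
  match w with
  | [::] => [:: 0%N]
  | l :: w' => let g := gaps P w' in
               if P l then 0%N :: g else (head 0%N g).+1 :: behead g
  end.

(* Canonical type of [u,v] as the list of pairs (i_p - i_{p-1} - 1,
   j_p - j_{p-1} - 1), p = 1..t+1, i.e. the factors W_{ij} of the product. *)
Definition canon_type (u v : word) : seq (nat * nat) :=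
  zip (gaps (fun l => l \in v) u) (gaps (fun l => l \in u) v).

(* f is multiplicative with values fc_{ij}: f(u,v) = prod_p fc_{i_p j_p}
   on every interval [u,v]. (The condition fc_{00} = 1 is stated separately.) *)
Definition is_multiplicative (R : comUnitRingType) (fc : nat -> nat -> R)
    (f : word -> word -> R) : Prop :=
  forall u v, wle u v -> f u v = \prod_(p <- canon_type u v) fc p.1 p.2.

Definition conv (R : comUnitRingType) (f g : word -> word -> R)
    (u v : word) : R :=
  \sum_(w \in interval u v) f u w * g w v.

Definition aword (i : nat) : word := [seq inl k | k <- iota 0 i].
Definition xword (j : nat) : word := [seq inr k | k <- iota 0 j].

Section Series.
Variable R : comUnitRingType.

Definition useries := nat -> R.
Definition umul (a b : useries) : useries :=
  fun n => \sum_(k < n.+1) a k * b (n - k)%N.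
Definition uone : useries := fun n => (n == 0%N)%:R.
Definition upow (h : useries) (j : nat) : useries := iter j (umul h) uone.
Definition ushift (a : useries) : useries :=
  fun n => if n is m.+1 then a m else 0.

(* bivariate series: S i j is the coefficient of x^i y^j *)
Definition series := nat -> nat -> R.
Definition ps_add (A B : series) : series := fun i j => A i j + B i j.
Definition ps_sub (A B : series) : series := fun i j => A i j - B i j.
Definition ps_mul (A B : series) : series :=
  fun i j => \sum_(k < i.+1) \sum_(l < j.+1) A k l * B (i - k)%N (j - l)%N.
Definition ps_one : series := fun i j => ((i == 0%N) && (j == 0%N))%:R.
Definition ps_zero : series := fun _ _ => 0.

(* 1/A : the multiplicative inverse of A (if it exists; 0 otherwise). *)
Definition ps_inv (A : series) : series :=
  match pselect (exists B : series, ps_mul A B = ps_one) with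
  | left h => projT1 (cid h)
  | right _ => ps_zero
  end.

Definition lift_x (a : useries) : series :=
  fun i j => if j == 0%N then a i else 0.
Definition lift_y (a : useries) : series :=
  fun i j => if i == 0%N then a j else 0.

(* F(x, h(y)) and G(h(x), y), for h with zero constant term (so only
   j <= n contributes to the coefficient of y^n). *)
Definition subst_y (F : series) (h : useries) : series :=
  fun i n => \sum_(j < n.+1) F i j * upow h j n.
Definition subst_x (G : series) (h : useries) : series :=
  fun n j => \sum_(i < n.+1) G i j * upow h i n.

End Series.

From Pilot Require Import Defs.
From HB Require Import structures.
From mathcomp Require Import all_boot all_algebra.
From mathcomp Require Import boolp classical_sets functions cardinality fsbigop.
From mathcomp Require Import ring zify.
From Stdlib Require Import Relation_Operators.

(* Split the sum defining [(f*g)(a_1..a_i, x_1..x_j)] according to the first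
   letter of the middle word [w].  If it is [x_(q+1)], then [g(w, v)] splits off
   the factor [g_0q] and what remains is a sum of the same kind over
   [[a_1..a_i, x_(q+2)..x_j]], except that the first factor of [f] counts one
   more [x]-letter; symmetrically for a first letter [a_(p+1)].  Hence the
   generating functions [P_b] (resp. [Q_g]) of such sums whose first [f]-factor
   is [f_p(q+b)] (resp. whose first [g]-factor is [g_(p+g)q]) satisfy
     P_b = F_b G_0 + x F_b Q_1 + y G_0 P_(b+1),   F_b(x) = sum_p f_pb x^p,
   and dually.  Iterating in [b] gives [P_b = (G_0 + x Q_1) S_b] with
   [S_b = sum_k F_(b+k) (y G_0)^k], so [S_0 = F~]; dually
   [Q_g = (F_0 + y P_1) T_g] with [T_0 = G~].  Eliminating [P_1] and [Q_1]:
     (F*G) (F_0 G~ + G_0 F~ - F~ G~) = F_0 G_0 F~ G~.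
   This holds over any commutative ring. *)

Set Implicit Arguments.
Unset Strict Implicit.
Unset Printing Implicit Defensive.
Import GRing.Theory.
Local Open Scope ring_scope.

(** * Bivariate formal power series *)

Lemma big_ord_widen0 (V : nmodType) (n N : nat) (F : nat -> V) :
  (n <= N)%N -> (forall k, (n <= k < N)%N -> F k = 0) ->
  \sum_(k < N) F k = \sum_(k < n) F k.
Proof.
move=> lenN F0; rewrite [RHS](big_ord_widen _ _ lenN) [RHS]big_mkcond /=.
by apply: eq_bigr => -[k /= ltkN] _; case: ltnP => // lenk; rewrite F0 ?lenk.
Qed.

Section PowerSeries.
Variable R : comUnitRingType.
Implicit Types (A B C : series R) (a c h : useries R).

HB.instance Definition _ := gen_eqMixin (series R).
HB.instance Definition _ := gen_choiceMixin (series R).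

Lemma ps_ext A B : (forall i j, A i j = B i j) -> A = B.
Proof. by move=> eqAB; apply/funext => i; apply/funext => j. Qed.

(* The ring laws are inherited from [{poly {poly R}}]: the coefficient [(i, j)] of a
   product only involves coefficients of index at most [(i, j)]. *)
Definition ps_trunc (i j : nat) A : {poly {poly R}} :=
  \poly_(k < i.+1) \poly_(l < j.+1) A k l.

Definition ps_agree (P : {poly {poly R}}) A (i j : nat) :=
  forall k l, (k <= i)%N -> (l <= j)%N -> P`_k`_l = A k l.

Lemma ps_trunc_agree A i j : ps_agree (ps_trunc i j A) A i j.
Proof. by move=> k l le_ki le_lj; rewrite coef_poly ltnS le_ki coef_poly ltnS le_lj. Qed.

Lemma ps_agree_one i j : ps_agree 1 (ps_one R) i j.
Proof. by move=> k l _ _; rewrite /ps_one coef1; case: eqP; rewrite ?coef1 ?coef0. Qed.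

Lemma ps_agree_mul P Q A B i j :
  ps_agree P A i j -> ps_agree Q B i j -> ps_agree (P * Q) (ps_mul A B) i j.
Proof.
move=> PA QB k l le_ki le_lj; rewrite coefM coef_sum; apply: eq_bigr => -[k' lek'] _.
rewrite coefM; apply: eq_bigr => -[l' lel'] _ /=.
by rewrite PA ?QB //; lia.
Qed.

Lemma ps_agree_coef P A i j : ps_agree P A i j -> P`_i`_j = A i j.
Proof. by apply. Qed.

Lemma ps_mulC : commutative (@ps_mul R).
Proof.
move=> A B; apply: ps_ext => i j; have tr := ps_trunc_agree.
rewrite -(ps_agree_coef (ps_agree_mul (tr A i j) (tr B i j))) mulrC.
exact: ps_agree_coef (ps_agree_mul (tr B i j) (tr A i j)).
Qed.

Lemma ps_mulA : associative (@ps_mul R).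
Proof.
move=> A B C; apply: ps_ext => i j; have tr := ps_trunc_agree.
rewrite -(ps_agree_coef (ps_agree_mul (tr A i j) (ps_agree_mul (tr B i j) (tr C i j)))).
by rewrite mulrA (ps_agree_coef (ps_agree_mul (ps_agree_mul (tr A i j) (tr B i j)) (tr C i j))).
Qed.

Lemma ps_mul1 : left_id (ps_one R) (@ps_mul R).
Proof.
move=> A; apply: ps_ext => i j; have tr := ps_trunc_agree.
rewrite -(ps_agree_coef (ps_agree_mul (@ps_agree_one i j) (tr A i j))) mul1r.
exact: ps_agree_coef (tr A i j).
Qed.

Lemma ps_mulDl : left_distributive (@ps_mul R) (@ps_add R).
Proof.
move=> A B C; apply: ps_ext => i j; rewrite /ps_mul /ps_add -big_split.
by apply: eq_bigr => k _; rewrite -big_split; apply: eq_bigr => l _; rewrite mulrDl.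
Qed.

Definition ps_opp A : series R := fun i j => - A i j.

Lemma ps_addA : associative (@ps_add R).
Proof. by move=> A B C; apply: ps_ext => i j; apply: addrA. Qed.
Lemma ps_addC : commutative (@ps_add R).
Proof. by move=> A B; apply: ps_ext => i j; apply: addrC. Qed.
Lemma ps_add0 : left_id (ps_zero R) (@ps_add R).
Proof. by move=> A; apply: ps_ext => i j; apply: add0r. Qed.
Lemma ps_addN : left_inverse (ps_zero R) ps_opp (@ps_add R).
Proof. by move=> A; apply: ps_ext => i j; apply: addNr. Qed.

HB.instance Definition _ :=
  GRing.isZmodule.Build (series R) ps_addA ps_addC ps_add0 ps_addN.

Lemma ps_one_neq0 : ps_one R != 0.
Proof. by apply/eqP => /(congr1 (fun A => A 0%N 0%N)) /eqP; rewrite oner_eq0. Qed.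

HB.instance Definition _ := GRing.Zmodule_isComNzRing.Build (series R)
  ps_mulA ps_mulC ps_mul1 ps_mulDl ps_one_neq0.

Lemma ps_coefD A B i j : (A + B) i j = A i j + B i j. Proof. by []. Qed.
Lemma ps_coefB A B i j : (A - B) i j = A i j - B i j. Proof. by []. Qed.
Lemma ps_coefM A B i j :
  (A * B) i j = \sum_(k < i.+1) \sum_(l < j.+1) A k l * B (i - k)%N (j - l)%N.
Proof. by []. Qed.
Lemma ps_coef00M A B : (A * B) 0%N 0%N = A 0%N 0%N * B 0%N 0%N.
Proof. by rewrite ps_coefM !big_ord1. Qed.
Lemma ps_coef_sum (I : Type) (r : seq I) (F : I -> series R) i j :
  (\sum_(k <- r) F k) i j = \sum_(k <- r) F k i j.
Proof. by elim: r => [|k r IH]; rewrite ?big_nil ?big_cons -?IH. Qed.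

Definition ps_ord_ge (d : nat) A := forall i j, (i + j < d)%N -> A i j = 0.

Lemma ps_ord_geB d A B : ps_ord_ge d A -> ps_ord_ge d B -> ps_ord_ge d (A - B).
Proof. by move=> hA hB i j lt_d; rewrite ps_coefB hA ?hB ?subr0. Qed.

Lemma ps_ord_geM d e A B :
  ps_ord_ge d A -> ps_ord_ge e B -> ps_ord_ge (d + e)%N (A * B).
Proof.
move=> hA hB i j lt_de; apply: big1 => -[k ltki] _; apply: big1 => -[l ltlj] _ /=.
have [lt_d | le_d] := ltnP (k + l) d; first by rewrite hA ?mul0r.
by rewrite hB ?mulr0 //; lia.
Qed.

Lemma ps_ord_geX d A : ps_ord_ge 1 A -> ps_ord_ge d (A ^+ d).
Proof.
move=> hA; elim: d => [|d IH]; first by [].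
by rewrite exprS -add1n; apply: ps_ord_geM.
Qed.

Lemma ps_ord_ge_eq0 A : (forall d, ps_ord_ge d A) -> A = 0.
Proof. by move=> hA; apply: ps_ext => i j; apply: (hA (i + j)%N.+1). Qed.

Lemma ps_ord_ge1 A : A 0%N 0%N = 0 -> ps_ord_ge 1 A.
Proof. by move=> A00 [|i] [|j]. Qed.

Lemma ps_contraction N (D : nat -> series R) :
  ps_ord_ge 1 N -> (forall b, D b = N * D b.+1) -> forall b, D b = 0.
Proof.
move=> hN hD b; apply: ps_ord_ge_eq0 => d; elim: d b => [|d IH] b; first by [].
by rewrite hD; apply: (ps_ord_geM hN).
Qed.

Lemma ps_geometric_coef N d i j : ps_ord_ge 1 N -> (i + j < d)%N ->
  (\sum_(k < d) N ^+ k) i j = (\sum_(k < (i + j)%N.+1) N ^+ k) i j.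
Proof.
move=> hN lt_d; rewrite !ps_coef_sum (@big_ord_widen0 _ _ _ (fun k => (N ^+ k) i j) lt_d) //.
by move=> k /andP[lt_k _]; apply: ps_ord_geX.
Qed.

(* The inverse of [1 - N] is the geometric series in [N], whose coefficient of
   total degree [i + j] stabilises after [i + j + 1] terms. *)
Lemma ps_invertible A : A 0%N 0%N = 1 -> exists B, A * B = 1.
Proof.
move=> A00; set N := 1 - A.
have hN : ps_ord_ge 1 N by apply: ps_ord_ge1; rewrite /N ps_coefB A00 subrr.
pose B : series R := fun i j => (\sum_(k < (i + j)%N.+1) N ^+ k) i j.
exists B; apply/eqP; rewrite -subr_eq0; apply/eqP/ps_ord_ge_eq0 => d.
have geo : (1 - N) * \sum_(k < d) N ^+ k = 1 - N ^+ d.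
  by rewrite -opprB mulNr -subrX1 opprB.
have -> : A * B - 1 = A * (B - \sum_(k < d) N ^+ k) - N ^+ d.
  have -> : A = 1 - N by rewrite /N opprB addrC subrK.
  by rewrite [in RHS]mulrBr geo; ring.
apply: ps_ord_geB; last exact: ps_ord_geX.
rewrite -[d in ps_ord_ge d]add0n; apply: ps_ord_geM => // i j lt_d.
by rewrite ps_coefB (ps_geometric_coef hN lt_d) subrr.
Qed.

Lemma ps_inv_eq A B : A * B = 1 -> ps_inv A = B.
Proof.
move=> AB1; rewrite /ps_inv; case: pselect => [ex|]; last by case; exists B.
case: (cid ex) => C /= AC1; have {}AC1 : A * C = 1 := AC1.
by rewrite -[C]mulr1 -AB1 mulrA [C * A]mulrC AC1 mul1r.
Qed.

Lemma ps_mulV A : A 0%N 0%N = 1 -> A * ps_inv A = 1.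
Proof. by case/ps_invertible => B AB1; rewrite (ps_inv_eq AB1). Qed.

Lemma coef_lift_xM a B i j :
  (lift_x a * B) i j = \sum_(k < i.+1) a k * B (i - k)%N j.
Proof.
rewrite ps_coefM; apply: eq_bigr => k _.
by rewrite big_ord_recl subn0 big1 ?addr0 // => l _; rewrite mul0r.
Qed.

Definition ps_swap A : series R := fun i j => A j i.

Lemma ps_swapD A B : ps_swap (A + B) = ps_swap A + ps_swap B.
Proof. by []. Qed.

Lemma ps_swapM A B : ps_swap (A * B) = ps_swap A * ps_swap B.
Proof. by apply: ps_ext => i j; rewrite /ps_swap !ps_coefM exchange_big. Qed.

Lemma ps_swap_lift_x a : ps_swap (lift_x a) = lift_y a.
Proof. by []. Qed.

Lemma coef_lift_yM a B i j :
  (lift_y a * B) i j = \sum_(l < j.+1) a l * B i (j - l)%N.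
Proof.
have -> : lift_y a * B = ps_swap (lift_x a * ps_swap B) by rewrite ps_swapM.
exact: coef_lift_xM.
Qed.

Lemma coef_lift_xy a c i j : (lift_x a * lift_y c) i j = a i * c j.
Proof.
rewrite coef_lift_xM big_ord_recr /= subnn big1 ?add0r // => k _.
by rewrite /lift_y subn_eq0 leqNgt ltn_ord mulr0.
Qed.

Lemma coef_lift_x_ushiftM a B i j :
  (lift_x (ushift a) * B) i j = \sum_(k < i) a k * B (i - k.+1)%N j.
Proof. by rewrite coef_lift_xM big_ord_recl mul0r add0r. Qed.

Lemma coef_lift_y_ushiftM a B i j :
  (lift_y (ushift a) * B) i j = \sum_(l < j) a l * B i (j - l.+1)%N.
Proof. by rewrite coef_lift_yM big_ord_recl mul0r add0r. Qed.

Definition ps_X : series R := lift_x (ushift (uone R)).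
Definition ps_Y : series R := lift_y (ushift (uone R)).

Lemma lift_x_ushift a : lift_x (ushift a) = ps_X * lift_x a.
Proof.
apply: ps_ext => -[|i] j; rewrite coef_lift_x_ushiftM ?big_ord0 /lift_x; first by case: eqP.
rewrite big_ord_recl big1 ?addr0 => [|k _]; last by rewrite mul0r.
by rewrite mul1r subn1.
Qed.

Lemma lift_y_ushift a : lift_y (ushift a) = ps_Y * lift_y a.
Proof. by rewrite -!ps_swap_lift_x lift_x_ushift ps_swapM. Qed.

Lemma upow_small h k n : h 0%N = 0 -> (n < k)%N -> upow h k n = 0.
Proof.
move=> h0; elim: k n => [//|k IH] n lt_nk /=.
rewrite /umul big_ord_recl h0 mul0r add0r big1 // => -[l lt_ln] _.
by rewrite IH ?mulr0 //; change (n - l.+1 < k)%N; lia.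
Qed.

Lemma subst_y_rec F h : h 0%N = 0 ->
  subst_y F h = lift_x (fun i => F i 0%N) + lift_y h * subst_y (fun i j => F i j.+1) h.
Proof.
move=> h0; apply: ps_ext => i n.
rewrite ps_coefD coef_lift_yM /subst_y big_ord_recl; congr (_ + _).
  by rewrite /upow /= /uone /lift_x; case: eqP; rewrite ?mulr1 ?mulr0.
rewrite (eq_bigr (fun j : 'I_n => \sum_(l < n.+1) h l * (F i j.+1 * upow h j (n - l)%N))).
  rewrite exchange_big !big_ord_recl h0 big1 => [|j _]; last by rewrite mul0r.
  rewrite /= mul0r !add0r; apply: eq_bigr => -[l lt_ln] _ /=; rewrite mulr_sumr.
  apply: (@big_ord_widen0 _ _ _ (fun j => h l.+1 * (F i j.+1 * upow h j (n - l.+1)%N)))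
    => [|j /andP[lt_j _]]; first by change (n - l.+1 < n)%N; lia.
  by rewrite upow_small ?mulr0 //; change (n - l.+1 < j)%N; lia.
move=> j _; have -> : upow h (lift ord0 j) n = umul h (upow h j) n by [].
by rewrite /umul mulr_sumr; apply: eq_bigr => l _; rewrite mulrCA.
Qed.

End PowerSeries.

(** * The interval [[a_1 ... a_i, x_1 ... x_j]] *)

Definition isA (l : letter) : bool := if l is inl _ then true else false.
Definition wa (s : seq nat) : word := [seq inl k | k <- s].
Definition wx (s : seq nat) : word := [seq inr k | k <- s].

Lemma a_idx_cat (s t : word) : a_idx (s ++ t) = a_idx s ++ a_idx t.
Proof. exact: pmap_cat. Qed.
Lemma x_idx_cat (s t : word) : x_idx (s ++ t) = x_idx s ++ x_idx t.
Proof. exact: pmap_cat. Qed.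
Lemma a_idx_wa s : a_idx (wa s) = s. Proof. by elim: s => //= k s ->. Qed.
Lemma x_idx_wa s : x_idx (wa s) = [::]. Proof. by elim: s. Qed.
Lemma a_idx_wx s : a_idx (wx s) = [::]. Proof. by elim: s. Qed.
Lemma x_idx_wx s : x_idx (wx s) = s. Proof. by elim: s => //= k s ->. Qed.

Lemma mem_inl k (w : word) : (inl k \in w) = (k \in a_idx w).
Proof. by elim: w => [|[k'|k'] w IH] //=; rewrite in_cons IH. Qed.
Lemma mem_inr k (w : word) : (inr k \in w) = (k \in x_idx w).
Proof. by elim: w => [|[k'|k'] w IH] //=; rewrite in_cons IH. Qed.

Lemma filter_isA (w : word) : filter isA w = wa (a_idx w).
Proof. by elim: w => [|[k|k] w IH] //=; rewrite IH. Qed.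
Lemma filter_isX (w : word) : filter (predC isA) w = wx (x_idx w).
Proof. by elim: w => [|[k|k] w IH] //=; rewrite IH. Qed.

Lemma pmap_subseq (T U : eqType) (f : T -> option U) (s1 s2 : seq T) :
  subseq s1 s2 -> subseq (pmap f s1) (pmap f s2).
Proof.
case/subseqP => m _ ->; elim: s2 m => [|x s2 IH] [|[] m] //=; first exact: sub0seq.
  by case: (f x) => //= y; rewrite eqxx.
by case: (f x) => //= y; apply: subseq_trans (subseq_cons _ y).
Qed.

Lemma a_idx_subseq (w1 w2 : word) : subseq w1 w2 -> subseq (a_idx w1) (a_idx w2).
Proof. exact: pmap_subseq. Qed.
Lemma x_idx_subseq (w1 w2 : word) : subseq w1 w2 -> subseq (x_idx w1) (x_idx w2).
Proof. exact: pmap_subseq. Qed.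

Lemma is_word_subseq (w1 w2 : word) : subseq w1 w2 -> is_word w2 -> is_word w1.
Proof.
move=> sw /andP[sa sx]; apply/andP; split.
  exact: @subseq_sorted _ ltn ltn_trans _ _ (a_idx_subseq sw) sa.
exact: @subseq_sorted _ ltn ltn_trans _ _ (x_idx_subseq sw) sx.
Qed.

Lemma is_word_wa s : sorted ltn s -> is_word (wa s).
Proof. by rewrite /is_word a_idx_wa x_idx_wa andbT. Qed.
Lemma is_word_wx s : sorted ltn s -> is_word (wx s).
Proof. by rewrite /is_word a_idx_wx x_idx_wx. Qed.

Lemma covers_subseq w w' : covers w w' ->
  subseq (a_idx w') (a_idx w) /\ subseq (x_idx w) (x_idx w').
Proof.
case=> _ _ [[s1 [s2 [k [-> ->]]]] | [s1 [s2 [k [-> ->]]]]];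
  rewrite !a_idx_cat !x_idx_cat /=; split; apply: cat_subseq => //; exact: subseq_cons.
Qed.

Lemma wle_subseq u w : clos_refl_trans word covers u w ->
  subseq (a_idx w) (a_idx u) /\ subseq (x_idx u) (x_idx w).
Proof.
elim=> [x y /covers_subseq //|x|x y z _ [ayx xxy] _ [azy xyz]]; first by [].
by split; [exact: subseq_trans ayx | exact: subseq_trans xyz].
Qed.

Lemma clos_rt_filter (e : word -> word -> Prop) (D P : pred letter) :
  (forall s1 s2 l, D l -> is_word (s1 ++ l :: s2) -> e (s1 ++ l :: s2) (s1 ++ s2)) ->
  forall s, {in s, forall l, ~~ P l -> D l} -> is_word s ->
  clos_refl_trans word e s (filter P s).
Proof.
move=> eD s.
suff gen pre : {in s, forall l, ~~ P l -> D l} -> is_word (pre ++ s) ->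
    clos_refl_trans word e (pre ++ s) (pre ++ filter P s) by exact: gen [::].
elim: s pre => [|l s IH] pre sD w_ls /=; first exact: rt_refl.
have {}IH pre' : is_word (pre' ++ s) -> clos_refl_trans word e (pre' ++ s) (pre' ++ filter P s).
  by apply: IH => l' ls'; apply: sD; rewrite in_cons ls' orbT.
case: ifP => Pl; first by rewrite -!cat_rcons; apply: IH; rewrite cat_rcons.
apply: rt_trans (rt_step _ _ _ _ (eD _ _ _ (sD _ (mem_head _ _) (negbT Pl)) w_ls)) (IH _ _).
by apply: is_word_subseq w_ls; apply: cat_subseq => //; apply: subseq_cons.
Qed.

Lemma clos_rt_flip (T : Type) (e : T -> T -> Prop) x y :
  clos_refl_trans T (fun u v => e v u) x y -> clos_refl_trans T e y x.
Proof.
elim=> [u v|u|u v w _ IHuv _ IHvw]; [exact: rt_step | exact: rt_refl | exact: rt_trans IHvw IHuv].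
Qed.

Lemma covers_del s1 s2 l : isA l -> is_word (s1 ++ l :: s2) -> covers (s1 ++ l :: s2) (s1 ++ s2).
Proof.
case: l => // k _ w; split=> //; last by left; exists s1, s2, k.
by apply: is_word_subseq w; apply: cat_subseq => //; apply: subseq_cons.
Qed.

Lemma covers_ins s1 s2 l : ~~ isA l -> is_word (s1 ++ l :: s2) -> covers (s1 ++ s2) (s1 ++ l :: s2).
Proof.
case: l => // k _ w; split=> //; last by right; exists s1, s2, k.
by apply: is_word_subseq w; apply: cat_subseq => //; apply: subseq_cons.
Qed.

Lemma wle_filter_del (P : pred letter) w : {in w, forall l, ~~ P l -> isA l} -> is_word w ->
  clos_refl_trans word covers w (filter P w).
Proof. exact: (@clos_rt_filter covers isA P (@covers_del)). Qed.

Lemma wle_filter_ins (P : pred letter) w : {in w, forall l, ~~ P l -> ~~ isA l} -> is_word w ->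
  clos_refl_trans word covers (filter P w) w.
Proof. by move=> wD w_w; apply/clos_rt_flip/(@clos_rt_filter _ (predC isA) P (@covers_ins)). Qed.

Lemma filter_mem_subseq (T : eqType) (s t : seq T) :
  uniq s -> subseq t s -> filter (mem t) s = t.
Proof. by move=> us /subseqP[m _ ->]; rewrite -mask_filter. Qed.

Lemma interval_aword_xword i j w :
  Defs.interval (aword i) (xword j) w <->
  subseq (a_idx w) (iota 0 i) /\ subseq (x_idx w) (iota 0 j).
Proof.
have sorted_iota n : sorted ltn (iota 0 n) := iota_ltn_sorted 0 n.
split=> [[[_ _ /wle_subseq[+ _]] [_ _ /wle_subseq[_]]]|[sa sx]].
  by rewrite /aword /xword -/(wa _) -/(wx _) a_idx_wa x_idx_wx.
have w_w : is_word w.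
  by apply/andP; split; [move: sa | move: sx] => /(@subseq_sorted _ ltn ltn_trans); apply.
have wa_w : is_word (wa (iota 0 i)) by apply: is_word_wa.
have wx_w : is_word (wx (iota 0 j)) by apply: is_word_wx.
split; split=> //.
- apply: rt_trans (_ : clos_refl_trans word covers _ (wa (a_idx w))) _.
    have sub_a : subseq (wa (a_idx w)) (wa (iota 0 i)) := map_subseq inl sa.
    rewrite -(filter_mem_subseq _ sub_a); last by rewrite /wa map_inj_uniq ?iota_uniq // => ? ? [].
    by apply: wle_filter_del => // _ /mapP[k _ ->].
  by rewrite -filter_isA; apply: wle_filter_ins.
- apply: rt_trans (_ : clos_refl_trans word covers _ (wx (x_idx w))) _.
    by rewrite -filter_isX; apply: wle_filter_del w_w => l _ /negPn.
  have sub_x : subseq (wx (x_idx w)) (wx (iota 0 j)) := map_subseq inr sx.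
  rewrite -(filter_mem_subseq _ sub_x).
    by apply: wle_filter_ins => // _ /mapP[k _ ->].
  by rewrite /wx map_inj_uniq ?iota_uniq // => ? ? [].
Qed.

Fixpoint interval_enum (k : nat) (sa sx : seq nat) : seq word :=
  if k is k'.+1 then
    [::] :: [seq inl (nth 0%N sa p) :: w | p <- iota 0 (size sa),
                                         w <- interval_enum k' (drop p.+1 sa) sx]
         ++ [seq inr (nth 0%N sx q) :: w | q <- iota 0 (size sx),
                                         w <- interval_enum k' sa (drop q.+1 sx)]
  else [:: [::]].

Lemma subseq_cons_nth (T : eqType) (x0 : T) (s t : seq T) p :
  (p < size s)%N -> subseq t (drop p.+1 s) -> subseq (nth x0 s p :: t) s.
Proof.
move=> lt_p sub; rewrite -[s in subseq _ s](cat_take_drop p) (drop_nth x0 lt_p).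
by rewrite -[_ :: t]cat0s; apply: cat_subseq; rewrite ?sub0seq //= eqxx.
Qed.

Lemma subseq_consP (T : eqType) (x0 y : T) (s t : seq T) : subseq (y :: t) s ->
  exists2 p, (p < size s)%N & nth x0 s p = y /\ subseq t (drop p.+1 s).
Proof.
elim: s => [|z s IH] //=; case: eqP => [<- sub|_ /IH[p lt_p eq_p]].
  by exists 0%N; rewrite ?drop0.
by exists p.+1.
Qed.

Lemma interval_enum_subseq k sa sx w : w \in interval_enum k sa sx ->
  subseq (a_idx w) sa /\ subseq (x_idx w) sx.
Proof.
elim: k sa sx w => [|k IH] sa sx w /=; first by rewrite inE => /eqP->; rewrite !sub0seq.
rewrite in_cons mem_cat; case/or3P => [/eqP-> | /allpairsPdep | /allpairsPdep].
- by split; apply: sub0seq.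
- case=> p [w' [+ /IH[sa' sx'] ->]]; rewrite mem_iota => /andP[_ lt_p].
  by split=> //=; apply: subseq_cons_nth.
- case=> q [w' [+ /IH[sa' sx'] ->]]; rewrite mem_iota => /andP[_ lt_q].
  by split=> //=; apply: subseq_cons_nth.
Qed.

Lemma interval_enum_complete k sa sx w : (size sa + size sx <= k)%N ->
  subseq (a_idx w) sa -> subseq (x_idx w) sx -> w \in interval_enum k sa sx.
Proof.
elim: k sa sx w => [|k IH] sa sx w.
  rewrite leqn0 addn_eq0 !size_eq0 => /andP[/eqP-> /eqP->].
  by rewrite !subseq0; case: w => [|[] ? ?] //; rewrite inE.
move=> le_k; rewrite /= in_cons mem_cat; case: w => [|[a|x] w] //= sa_w sx_w.
  case: (subseq_consP 0%N sa_w) => p lt_p [<- sub].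
  apply/orP; left; apply/allpairsPdep; exists p, w; split=> //; first by rewrite mem_iota.
  by apply: IH => //; rewrite size_drop; lia.
case: (subseq_consP 0%N sx_w) => q lt_q [<- sub].
apply/orP; right; apply/allpairsPdep; exists q, w; split=> //; first by rewrite mem_iota.
by apply: IH => //; rewrite size_drop; lia.
Qed.

Lemma uniq_cons_family (c : nat -> letter) n (L : nat -> seq word) :
  {in gtn n &, injective c} -> (forall p, uniq (L p)) ->
  uniq [seq c p :: w | p <- iota 0 n, w <- L p].
Proof.
move=> c_inj uL; apply: allpairs_uniq_dep => [|p _|]; rewrite ?iota_uniq //.
have lt_tag u : u \in [seq existT (fun=> word) p w | p <- iota 0 n, w <- L p] -> (tag u < n)%N.
  by case/allpairsPdep => p [w [+ _ ->]]; rewrite mem_iota.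
move=> [p1 w1] [p2 w2] /lt_tag lt1 /lt_tag lt2 /= [/c_inj eq_p ->].
by rewrite eq_p.
Qed.

Lemma nth_inj_in (T : eqType) (x0 : T) (s : seq T) :
  uniq s -> {in gtn (size s) &, injective (nth x0 s)}.
Proof. by move=> us p q lt_p lt_q /eqP; rewrite nth_uniq // => /eqP. Qed.

Lemma interval_enum_uniq k sa sx : uniq sa -> uniq sx -> uniq (interval_enum k sa sx).
Proof.
elim: k sa sx => [|k IH] sa sx usa usx //=.
rewrite mem_cat cat_uniq negb_or -!andbA; apply/and5P; split.
- by apply/allpairsPdep => -[p [w [_ _ //]]].
- by apply/allpairsPdep => -[p [w [_ _ //]]].
- apply: uniq_cons_family => [p q lt_p lt_q [] /(nth_inj_in usa lt_p lt_q) //|p].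
  exact/IH/usx/drop_uniq.
- apply/hasPn => _ /allpairsPdep[q [v [_ _ ->]]].
  by apply/allpairsPdep => -[p [w [_ _ []]]].
- apply: uniq_cons_family => [p q lt_p lt_q [] /(nth_inj_in usx lt_p lt_q) //|q].
  exact/IH/drop_uniq.
Qed.

Local Notation gaps_in v u := (gaps (fun l : letter => l \in v) u).

Definition bump_head (b : nat) (s : seq nat) : seq nat := (head 0%N s + b)%N :: behead s.

Lemma bump_head0 (P : pred letter) s : bump_head 0 (gaps P s) = gaps P s.
Proof. by case: s => [|l s] //=; case: (P l); rewrite /bump_head addn0. Qed.

Lemma bump_head_gapsS (P : pred letter) b l s : ~~ P l ->
  bump_head b (gaps P (l :: s)) = bump_head b.+1 (gaps P s).
Proof. by move=> /negbTE /= ->; rewrite /bump_head /= addSnnS. Qed.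

Lemma gaps_pred0 (P : pred letter) s : all (predC P) s -> gaps P s = [:: size s].
Proof. by elim: s => [|l s IH] //= /andP[/negbTE -> /IH->]. Qed.

Lemma gaps_cat_cons (P : pred letter) s1 l s2 : all (predC P) s1 -> P l ->
  gaps P (s1 ++ l :: s2) = size s1 :: gaps P s2.
Proof.
move=> s1P Pl; elim: s1 s1P => [|l' s1 IH] /= => [|/andP[/negbTE -> /IH->]] //.
by rewrite Pl.
Qed.

Lemma eq_in_gaps (P Q : pred letter) s : {in s, P =1 Q} -> gaps P s = gaps Q s.
Proof.
elim: s => [|l s IH] //= PQ; rewrite PQ ?mem_head // IH // => l' ls'.
by apply: PQ; rewrite in_cons ls' orbT.
Qed.

Section SplitGaps.
Variables (u1 u2 w : word) (l : letter).
Hypothesis u_uniq : uniq (u1 ++ l :: u2).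
Hypothesis w_after : {in w, forall l', l' \in u1 ++ l :: u2 -> l' \in u2}.

Lemma gaps_in_split : gaps_in (l :: w) (u1 ++ l :: u2) = size u1 :: gaps_in w u2.
Proof.
move: u_uniq; rewrite cat_uniq /= negb_or => /and4P[_ /andP[lu1 /hasPn u2u1] lu2 _].
rewrite gaps_cat_cons ?mem_head //.
  by congr (_ :: _); apply: eq_in_gaps => l' l'u2; rewrite in_cons (negbTE (memPn lu2 _ l'u2)).
apply/allP => l' l'u1; rewrite /= in_cons negb_or; apply/andP; split.
  by apply: contraNneq lu1 => <-.
apply/negP => /w_after; rewrite mem_cat l'u1 => /(_ isT) /u2u1.
by rewrite l'u1.
Qed.

Lemma gaps_in_cons_split : gaps_in (u1 ++ l :: u2) (l :: w) = 0%N :: gaps_in u2 w.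
Proof.
rewrite /= mem_cat mem_head orbT; congr (_ :: _); apply: eq_in_gaps => l' l'w /=.
by apply/idP/idP => [/(w_after l'w)|l'u2]; rewrite // mem_cat in_cons l'u2 !orbT.
Qed.

End SplitGaps.

Lemma map_split_nth (T U : Type) (x0 : T) (f : T -> U) (s : seq T) p : (p < size s)%N ->
  map f s = map f (take p s) ++ f (nth x0 s p) :: map f (drop p.+1 s).
Proof. by move=> lt_p; rewrite -{1}(cat_take_drop p s) (drop_nth x0 lt_p) map_cat. Qed.

(** * A recursion for the convolution *)

Section ShiftedConvolution.
Variable R : comUnitRingType.
Variables fc gc : series R.

(* [shconv k b g n m] is the convolution of [f] and [g] over the interval
   [[a_1..a_n, x_1..x_m]] in which the first factor [fc p q] of [f] is replaced
   by [fc p (q + b)] and the first factor [gc p q] of [g] by [gc (p + g) q] (see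
   [interval_enum_sum]).  The fuel [k] suffices once [n + m <= k]. *)
Fixpoint shconv (k b g n m : nat) : R :=
  if k is k'.+1 then
    fc n b * gc g m
    + \sum_(p < n) fc p b * shconv k' 0 g.+1 (n - p.+1)%N m
    + \sum_(q < m) gc g q * shconv k' b.+1 0 n (m - q.+1)%N
  else fc n b * gc g m.

Lemma shconvS k b g n m : shconv k.+1 b g n m =
  fc n b * gc g m
  + \sum_(p < n) fc p b * shconv k 0 g.+1 (n - p.+1)%N m
  + \sum_(q < m) gc g q * shconv k b.+1 0 n (m - q.+1)%N.
Proof. by []. Qed.

Lemma shconv_fuel k b g n m : (n + m <= k)%N -> shconv k b g n m = shconv (n + m)%N b g n m.
Proof.
suff fuelS k' b' g' n' m' : (n' + m' <= k')%N ->
    shconv k'.+1 b' g' n' m' = shconv k' b' g' n' m'.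
  move=> le_k; rewrite -(subnK le_k); elim: (k - _)%N => // d IH.
  by rewrite addSn fuelS ?IH //; lia.
elim: k' b' g' n' m' => [|k' IH] b' g' n' m' le_k'; rewrite shconvS.
  by move: le_k'; rewrite leqn0 addn_eq0 => /andP[/eqP-> /eqP->]; rewrite !big_ord0 !addr0.
by rewrite shconvS; congr (_ + _ + _); apply: eq_bigr => -[p lt_p] _; rewrite IH //=; lia.
Qed.

(* [fweight b u w] is [f(u, w)] computed as if [b] letters not in [u] preceded [w];
   dually for [gweight]. *)
Definition fweight (b : nat) (u w : word) : R :=
  \prod_(p <- zip (gaps_in w u) (bump_head b (gaps_in u w))) fc p.1 p.2.
Definition gweight (g : nat) (w v : word) : R :=
  \prod_(p <- zip (bump_head g (gaps_in v w)) (gaps_in w v)) gc p.1 p.2.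

Lemma fweight_nil b u : fweight b u [::] = fc (size u) b.
Proof. by rewrite /fweight gaps_pred0 ?big_seq1 //; apply/allP. Qed.

Lemma gweight_nil g v : gweight g [::] v = gc g (size v).
Proof. by rewrite /gweight (@gaps_pred0 _ v) ?big_seq1 //; apply/allP. Qed.

Lemma fweight_cons_notin b u l w : l \notin u -> fweight b u (l :: w) = fweight b.+1 u w.
Proof.
move=> lu; rewrite /fweight bump_head_gapsS //; congr (\prod_(_ <- zip _ _) _).
by apply: eq_in_gaps => l' l'u; rewrite /= in_cons; case: eqP => // eq_l; rewrite -eq_l l'u in lu.
Qed.

Lemma gweight_cons_notin g l w v : l \notin v -> gweight g (l :: w) v = gweight g.+1 w v.
Proof.
move=> lv; rewrite /gweight bump_head_gapsS //; congr (\prod_(_ <- zip _ _) _).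
by apply: eq_in_gaps => l' l'v; rewrite /= in_cons; case: eqP => // eq_l; rewrite -eq_l l'v in lv.
Qed.

Lemma fweight_inl b sa p w : uniq sa -> (p < size sa)%N -> subseq (a_idx w) (drop p.+1 sa) ->
  fweight b (wa sa) (inl (nth 0%N sa p) :: w) = fc p b * fweight 0 (wa (drop p.+1 sa)) w.
Proof.
move=> usa lt_p sub; have split_sa := map_split_nth 0%N inl lt_p.
have usa' : uniq (wa sa) by rewrite map_inj_uniq // => ? ? [].
have w_after : {in w, forall l, l \in wa sa -> l \in wa (drop p.+1 sa)}.
  move=> [c|c]; rewrite !(mem_inl, mem_inr) ?(a_idx_wa, x_idx_wa) // => cw _.
  exact: mem_subseq cw.
rewrite /fweight /wa split_sa gaps_in_split ?gaps_in_cons_split -?split_sa //.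
by rewrite size_map size_takel 1?ltnW // big_cons bump_head0.
Qed.

Lemma gweight_inr g sx q w : uniq sx -> (q < size sx)%N -> subseq (x_idx w) (drop q.+1 sx) ->
  gweight g (inr (nth 0%N sx q) :: w) (wx sx) = gc g q * gweight 0 w (wx (drop q.+1 sx)).
Proof.
move=> usx lt_q sub; have split_sx := map_split_nth 0%N inr lt_q.
have usx' : uniq (wx sx) by rewrite map_inj_uniq // => ? ? [].
have w_after : {in w, forall l, l \in wx sx -> l \in wx (drop q.+1 sx)}.
  move=> [c|c]; rewrite !(mem_inl, mem_inr) ?(a_idx_wx, x_idx_wx) // => cw _.
  exact: mem_subseq cw.
rewrite /gweight /wx split_sx gaps_in_split ?gaps_in_cons_split -?split_sx //.
by rewrite size_map size_takel 1?ltnW // big_cons bump_head0.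
Qed.

Lemma interval_enum_sum k b g sa sx : uniq sa -> uniq sx ->
  \sum_(w <- interval_enum k sa sx) fweight b (wa sa) w * gweight g w (wx sx)
  = shconv k b g (size sa) (size sx).
Proof.
have sum_iota n (F : nat -> R) : \sum_(p <- iota 0 n) F p = \sum_(p < n) F p.
  by rewrite -(big_mkord xpredT) /index_iota subn0.
elim: k b g sa sx => [|k IH] b g sa sx usa usx /=.
  by rewrite big_seq1 fweight_nil gweight_nil !size_map.
rewrite big_cons big_cat !big_allpairs_dep /= fweight_nil gweight_nil !size_map !sum_iota.
rewrite addrA; congr (_ + _ + _); apply: eq_bigr => -[p lt_p] _ /=.
  rewrite -(size_drop p.+1 sa) -(IH _ _ _ _ (drop_uniq _ usa) usx) mulr_sumr !big_seq.
  apply: eq_bigr => w /interval_enum_subseq[sub _].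
  by rewrite (fweight_inl b usa lt_p sub) gweight_cons_notin ?mem_inl ?a_idx_wx ?in_nil // mulrA.
rewrite -(size_drop p.+1 sx) -(IH _ _ _ _ usa (drop_uniq _ usx)) mulr_sumr !big_seq.
apply: eq_bigr => w /interval_enum_subseq[_ sub].
by rewrite (gweight_inr g usx lt_p sub) fweight_cons_notin ?mem_inr ?x_idx_wa ?in_nil // mulrCA.
Qed.

End ShiftedConvolution.

Lemma conv_shconv (R : comUnitRingType) (f g : word -> word -> R) (fc gc : series R) i j :
  is_multiplicative fc f -> is_multiplicative gc g ->
  conv f g (aword i) (xword j) = shconv fc gc (i + j) 0 0 i j.
Proof.
move=> fmul gmul; set L := interval_enum (i + j) (iota 0 i) (iota 0 j).
have int_L : Defs.interval (aword i) (xword j) = [set` L]%classic.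
  apply/funext => w; apply/propext; rewrite interval_aword_xword /=; split.
    by case; apply: interval_enum_complete; rewrite !size_iota.
  exact: interval_enum_subseq.
rewrite /conv int_L -fsbig_seq ?interval_enum_uniq ?iota_uniq //.
have := interval_enum_sum fc gc (i + j) 0 0 (iota_uniq 0 i) (iota_uniq 0 j).
rewrite !size_iota => <-; rewrite !big_seq; apply: eq_bigr => w wL.
have [uw wv] : Defs.interval (aword i) (xword j) w by rewrite int_L.
by rewrite fmul // gmul // /fweight /gweight !bump_head0.
Qed.

(** * Generating functions *)

Section GeneratingFunctions.
Variable R : comUnitRingType.
Variables fc gc : series R.

(* The series [P_b], [Q_g], [S_b], [T_g] of the proof sketch are [shconvF b],
   [shconvG g], [substF b] and [substG g]. *)
Definition shconvF b : series R := fun n m => shconv fc gc (n + m)%N b 0 n m.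
Definition shconvG g : series R := fun n m => shconv fc gc (n + m)%N 0 g n m.

Lemma shconvF_rec b : shconvF b =
  lift_x (fc^~ b) * lift_y (gc 0%N) + lift_x (ushift (fc^~ b)) * shconvG 1
  + lift_y (ushift (gc 0%N)) * shconvF b.+1.
Proof.
apply: ps_ext => n m; rewrite !ps_coefD coef_lift_xy coef_lift_x_ushiftM coef_lift_y_ushiftM.
rewrite /shconvF -(shconv_fuel fc gc b 0 (leqnSn _)) shconvS.
by congr (_ + _ + _); apply: eq_bigr => -[p lt_p] _; rewrite shconv_fuel //=; lia.
Qed.

Definition substF b : series R := subst_y (fun i j => fc i (b + j)%N) (ushift (gc 0%N)).

Lemma substF_rec b : substF b = lift_x (fc^~ b) + lift_y (ushift (gc 0%N)) * substF b.+1.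
Proof.
rewrite /substF subst_y_rec //; congr (lift_x _ + _ * subst_y _ _).
  by apply/funext => i; rewrite addn0.
by apply/funext => i; apply/funext => j; rewrite addSnnS.
Qed.

Definition shconvF_factor : series R := lift_y (gc 0%N) + ps_X R * shconvG 1.

(* The difference [D b] of the two sides satisfies [D b = y G(0, y) * D b.+1]. *)
Lemma shconvF_eq b : shconvF b = shconvF_factor * substF b.
Proof.
apply/eqP; rewrite -subr_eq0; apply/eqP; move: b.
apply: (ps_contraction (N := lift_y (ushift (gc 0%N)))) => [|b]; first exact: ps_ord_ge1.
by rewrite shconvF_rec substF_rec lift_x_ushift /shconvF_factor; ring.
Qed.

End GeneratingFunctions.

Section Duality.
Variable R : comUnitRingType.
Implicit Types fc gc : series R.

Lemma shconv_swap fc gc k b g n m :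
  shconv (ps_swap gc) (ps_swap fc) k g b m n = shconv fc gc k b g n m.
Proof.
elim: k b g n m => [|k IH] b g n m; first exact: mulrC.
rewrite !shconvS addrAC; congr (_ + _ + _); first exact: mulrC.
  by apply: eq_bigr => p _; rewrite IH.
by apply: eq_bigr => q _; rewrite IH.
Qed.

Lemma shconvG_swap fc gc g : shconvG fc gc g = ps_swap (shconvF (ps_swap gc) (ps_swap fc) g).
Proof. by apply: ps_ext => n m; rewrite /shconvG /shconvF /ps_swap shconv_swap addnC. Qed.

Definition substG fc gc g : series R :=
  subst_x (fun i j => gc (g + i)%N j) (ushift (fc^~ 0%N)).

Lemma substG_swap fc gc g : substG fc gc g = ps_swap (substF (ps_swap gc) (ps_swap fc) g).
Proof. by []. Qed.

Lemma substG_rec fc gc g :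
  substG fc gc g = lift_y (gc g) + lift_x (ushift (fc^~ 0%N)) * substG fc gc g.+1.
Proof. by rewrite !substG_swap substF_rec ps_swapD ps_swapM. Qed.

Definition shconvG_factor fc gc : series R := lift_x (fc^~ 0%N) + ps_Y R * shconvF fc gc 1.

Lemma shconvG_eq fc gc g : shconvG fc gc g = shconvG_factor fc gc * substG fc gc g.
Proof.
rewrite shconvG_swap shconvF_eq ps_swapM substG_swap; congr (_ * _).
by rewrite /shconvF_factor ps_swapD ps_swapM shconvG_swap.
Qed.

End Duality.

Lemma convolution_identity (T : comRingType) (FG a b X Y S1 T1 F0 G0 Ft Gt : T) :
  FG = a * Ft -> a = G0 + X * (b * T1) -> b = F0 + Y * (a * S1) ->
  Ft = F0 + Y * G0 * S1 -> Gt = G0 + X * F0 * T1 ->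
  FG * (F0 * Gt + G0 * Ft - Ft * Gt) = F0 * G0 * (Ft * Gt).
Proof.
move=> -> ea eb eFt eGt.
have aGt : a * (1 - X * Y * T1 * S1) = Gt.
  have YaS1 : Y * (a * S1) = b - F0 by rewrite eb; ring.
  transitivity (a - X * T1 * (Y * (a * S1))); first by ring.
  by rewrite YaS1 {1}ea eGt; ring.
transitivity (a * (1 - X * Y * T1 * S1) * Ft * F0 * G0); first by rewrite eFt eGt; ring.
by rewrite aGt; ring.
Qed.

Lemma inverse_combination (T : comRingType) (FG F0 G0 Ft Gt i1 i2 i3 : T) :
  FG * (F0 * Gt + G0 * Ft - Ft * Gt) = F0 * G0 * (Ft * Gt) ->
  Ft * G0 * i1 = 1 -> F0 * Gt * i2 = 1 -> F0 * G0 * i3 = 1 ->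
  FG * (i1 + i2 - i3) = 1.
Proof.
move=> eFG h1 h2 h3.
have e3 : i3 = Ft * Gt * i1 * i2.
  transitivity (i3 * ((Ft * G0 * i1) * (F0 * Gt * i2))); first by rewrite h1 h2 !mulr1.
  transitivity ((F0 * G0 * i3) * (Ft * Gt * i1 * i2)); first by ring.
  by rewrite h3 mul1r.
have -> : i1 + i2 - i3 = (F0 * Gt + G0 * Ft - Ft * Gt) * (i1 * i2).
  rewrite e3; transitivity ((F0 * Gt * i2) * i1 + (Ft * G0 * i1) * i2 - Ft * Gt * i1 * i2).
    by rewrite h1 h2 !mul1r.
  by ring.
rewrite mulrA eFG; transitivity ((Ft * G0 * i1) * (F0 * Gt * i2)); first by ring.
by rewrite h1 h2 mulr1.
Qed.

Section Identity.
Variable R : comUnitRingType.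
Variables fc gc : series R.

Lemma shconvF0_identity :
  shconvF fc gc 0 * (lift_x (fc^~ 0%N) * substG fc gc 0 + lift_y (gc 0%N) * substF fc gc 0
                   - substF fc gc 0 * substG fc gc 0)
  = lift_x (fc^~ 0%N) * lift_y (gc 0%N) * (substF fc gc 0 * substG fc gc 0).
Proof.
apply: (convolution_identity (a := shconvF_factor fc gc) (b := shconvG_factor fc gc)
         (X := ps_X R) (Y := ps_Y R) (S1 := substF fc gc 1) (T1 := substG fc gc 1)).
- exact: shconvF_eq.
- by rewrite /shconvF_factor shconvG_eq.
- by rewrite /shconvG_factor shconvF_eq.
- by rewrite substF_rec lift_y_ushift.
- by rewrite substG_rec lift_x_ushift.
Qed.

End Identity.

Unset Implicit Arguments.

Theorem theorem5p2 (R : comUnitRingType)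
    (hQ : forall n : nat, (n.+1)%:R \is a @GRing.unit R)
    (f g : word -> word -> R) (fc gc : nat -> nat -> R) :
  fc 0%N 0%N = 1 -> gc 0%N 0%N = 1 ->
  is_multiplicative fc f -> is_multiplicative gc g ->
  let F : series R := fc in
  let G : series R := gc in
  let FG : series R := fun i j => conv f g (aword i) (xword j) in
  let F0 : useries R := fun i => fc i 0%N in
  let G0 : useries R := fun j => gc 0%N j in
  let Ft := subst_y F (ushift G0) in
  let Gt := subst_x G (ushift F0) in
  ps_inv FG =
  ps_sub (ps_add (ps_inv (ps_mul Ft (lift_y G0)))
                 (ps_inv (ps_mul (lift_x F0) Gt)))
         (ps_inv (ps_mul (lift_x F0) (lift_y G0))).
Proof.
move=> fc00 gc00 fmul gmul F G FG F0 G0 Ft Gt.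
have -> : FG = shconvF fc gc 0 by apply: ps_ext => i j; exact: conv_shconv.
change (ps_inv (shconvF fc gc 0) = ps_inv (substF fc gc 0 * lift_y G0)
  + ps_inv (lift_x F0 * substG fc gc 0) - ps_inv (lift_x F0 * lift_y G0)).
have substF00 : substF fc gc 0 0%N 0%N = 1 by rewrite /substF /subst_y big_ord1 mulr1.
have substG00 : substG fc gc 0 0%N 0%N = 1 by rewrite /substG /subst_x big_ord1 mulr1.
apply: ps_inv_eq; apply: (inverse_combination (shconvF0_identity fc gc));
  by apply: ps_mulV; rewrite ps_coef00M ?substF00 ?substG00 /lift_x /lift_y /= ?fc00 ?gc00 mulr1.
Qed.
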